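(* For all positive integers $k,n$ it holds that $u(n,n+k)\ge \varepsilon(n,n+k)-2^{k-1}-1$.
   Context: All matrices are binary. For a nonempty set $S$ of columns of a binary matrix, let $z$ be the sum over the integers of the columns in $S$. $S$ is called $1$-free if no entry of $z$ equals $1$, and even if all entries of $z$ are even. For a binary $m\times n$ matrix $A$ with $m<n$: $\varepsilon(A)$ is the smallest cardinality of a nonempty even set of columns, and $u(A)$ is the smallest cardinality of a nonempty $1$-free set of columns. For $m<n$, $\varepsilon(m,n)$ and $u(m,n)$ denote the maxima of $\varepsilon(A)$, resp. $u(A)$, over all binary $m\times n$ matrices $A$. *)

From mathcomp Require Import all_boot all_algebra.
Set Implicit Arguments. Unset Strict Implicit. Unset Printing Implicit Defensive.

(* Binary m x n matrices are matrices with boolean entries (true = 1).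
   For a set S of columns, the integer column sum z has entry
   z_i = #|{ j in S | A i j = 1 }| at row i. *)
Definition colsum (m n : nat) (A : 'M[bool]_(m, n)) (S : {set 'I_n}) (i : 'I_m) : nat :=
  #|[set j in S | A i j]|.

Definition one_free (m n : nat) (A : 'M[bool]_(m, n)) (S : {set 'I_n}) : bool :=
  [forall i, colsum A S i != 1%N].

Definition even_set (m n : nat) (A : 'M[bool]_(m, n)) (S : {set 'I_n}) : bool :=
  [forall i, ~~ odd (colsum A S i)].

(* The default value n.+1 is only used when no such set exists, which
   never happens for m < n (the columns are then linearly dependent over GF(2)). *)
Definition epsA (m n : nat) (A : 'M[bool]_(m, n)) : nat :=
  \big[minn/n.+1]_(S : {set 'I_n} | (S != set0) && even_set A S) #|S|.

Definition uA (m n : nat) (A : 'M[bool]_(m, n)) : nat :=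
  \big[minn/n.+1]_(S : {set 'I_n} | (S != set0) && one_free A S) #|S|.

Definition eps_mn (m n : nat) : nat := \max_(A : 'M[bool]_(m, n)) epsA A.
Definition u_mn (m n : nat) : nat := \max_(A : 'M[bool]_(m, n)) uA A.

From mathcomp Require Import all_boot all_order matrix zify.
Set Implicit Arguments. Unset Strict Implicit. Unset Printing Implicit Defensive.
Import Order.TTheory.

(* The even sets of a binary m x N matrix A form the kernel of A over GF(2), of
   size at least 2^(N-m), and each column lies in at most half of them; counting
   incidences gives the Plotkin-type bound 2 eps(A) (2^(N-m) - 1) <= N 2^(N-m).
   For the other side, with N = n + k and T = 2^k - 1, number the columns from 1
   and take the rows {c, c + T} for c + T <= N together with {w, 2^j, w - 2^j}
   for each w <= T that is not a power of two, 2^j being its leading power: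
   these are exactly n rows.  A nonempty 1-free set is then T-periodic and its
   trace on {1, ..., T} meets no triple in exactly one point, which forces at
   least 2^(k-1) elements (split {1, ..., T} at its top power of two and
   induct on k).  Hence u(n, N) >= 2^(k-1) floor(N / T), whereas the Plotkin
   bound gives eps(A) < 2^(k-1) (floor(N / T) + 1). *)

Section SymDiff.
Variable T : finType.
Implicit Types X Y : {set T}.

Definition symdiff X Y : {set T} := (X :\: Y) :|: (Y :\: X).

Lemma in_symdiff x X Y : (x \in symdiff X Y) = (x \in X) (+) (x \in Y).
Proof. by rewrite !inE; case: (x \in X); case: (x \in Y). Qed.

Lemma symdiffK Y : cancel (symdiff ^~ Y) (symdiff ^~ Y).
Proof. by move=> X; apply/setP => x; rewrite !in_symdiff -addbA addbb addbF. Qed.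

Lemma odd_card_symdiff X Y : odd #|symdiff X Y| = odd #|X| (+) odd #|Y|.
Proof.
have disj : (X :\: Y) :&: (Y :\: X) = set0.
  by apply/setP => x; rewrite !inE; case: (x \in X); case: (x \in Y).
have := cardsUI (X :\: Y) (Y :\: X); rewrite disj cards0 addn0 => ->.
rewrite -(cardsID Y X) -(cardsID X Y) setIC !oddD.
by rewrite addbACA addbb addFb.
Qed.

End SymDiff.

Section EvenSets.
Variables (m N : nat) (A : 'M[bool]_(m, N)).

Definition parity (S : {set 'I_N}) : {ffun 'I_m -> bool} := [ffun i => odd (colsum A S i)].

Lemma parity_symdiff S S' i : parity (symdiff S S') i = parity S i (+) parity S' i.
Proof.
rewrite !ffunE /colsum -odd_card_symdiff.
suff -> : [set j in symdiff S S' | A i j] = symdiff [set j in S | A i j] [set j in S' | A i j] by [].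
by apply/setP => j; rewrite !inE; case: (j \in S); case: (j \in S'); case: (A i j).
Qed.

Definition even_sets : {set {set 'I_N}} := [set S | even_set A S].

Lemma even_setsP S : reflect (forall i, parity S i = false) (S \in even_sets).
Proof.
rewrite inE; apply: (iffP forallP) => h i; first by rewrite ffunE; apply/negbTE/h.
by have := h i; rewrite ffunE => ->.
Qed.

Lemma set0_even : set0 \in even_sets.
Proof.
apply/even_setsP => i; rewrite ffunE /colsum.
by rewrite (_ : [set j in set0 | A i j] = set0) ?cards0 //; apply/setP => j; rewrite !inE.
Qed.

Lemma symdiff_even S S' : S \in even_sets -> S' \in even_sets -> symdiff S S' \in even_sets.
Proof.
move=> /even_setsP hS /even_setsP hS'; apply/even_setsP => i.
by rewrite parity_symdiff hS hS'.
Qed.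

Lemma symdiff_parity_eq S S' : parity S = parity S' -> symdiff S S' \in even_sets.
Proof. by move=> eqSS'; apply/even_setsP => i; rewrite parity_symdiff eqSS' addbb. Qed.

Lemma card_parity_fiber_le v : #|[set S | parity S == v]| <= #|even_sets|.
Proof.
have [->|[S0 hS0]] := set_0Vmem [set S | parity S == v]; first by rewrite cards0.
rewrite -(card_imset _ (can_inj (symdiffK S0))).
apply/subset_leq_card/subsetP => _ /imsetP[S hS ->].
by apply: symdiff_parity_eq; move: hS hS0; rewrite !inE => /eqP -> /eqP ->.
Qed.

Lemma card_even_sets_ge : 2 ^ N <= 2 ^ m * #|even_sets|.
Proof.
have -> : 2 ^ N = \sum_(S : {set 'I_N}) 1.
  by rewrite sum1_card -cardsT -powersetT card_powerset cardsT card_ord.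
rewrite (partition_big parity xpredT) //=.
apply: (@leq_trans (\sum_(v : {ffun 'I_m -> bool}) #|even_sets|)).
  by apply: leq_sum => v _; rewrite sum1dep_card; exact: card_parity_fiber_le.
by rewrite sum_nat_const card_ffun card_bool card_ord.
Qed.

Lemma card_even_sets_mem_le j : 2 * #|[set S in even_sets | j \in S]| <= #|even_sets|.
Proof.
set Ej := [set S in even_sets | j \in S].
have [->|[S1 hS1]] := set_0Vmem Ej; first by rewrite cards0.
have /andP[E1 j1] : (S1 \in even_sets) && (j \in S1) by rewrite inE in hS1.
have subEj : Ej \subset even_sets by apply/subsetP => S; rewrite inE => /andP[].
have : #|Ej| <= #|even_sets :\: Ej|.
  rewrite -(card_imset _ (can_inj (symdiffK S1))).
  apply/subset_leq_card/subsetP => X /imsetP[S]; rewrite [S \in Ej]inE => /andP[ES jS] ->.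
  have Esd := symdiff_even ES E1.
  by rewrite in_setD Esd andbT [_ \in Ej]inE Esd in_symdiff jS j1.
by have := cardsID Ej even_sets; rewrite (setIidPr subEj); lia.
Qed.

Lemma sum_card_even_sets_le : 2 * \sum_(S in even_sets) #|S| <= N * #|even_sets|.
Proof.
have -> : \sum_(S in even_sets) #|S| = \sum_(j : 'I_N) #|[set S in even_sets | j \in S]|.
  under eq_bigr => S _ do rewrite -sum1_card big_mkcond /=.
  by rewrite exchange_big /=; apply: eq_bigr => j _; rewrite -big_mkcondr sum1dep_card.
rewrite big_distrr /=; apply: (@leq_trans (\sum_(j : 'I_N) #|even_sets|)).
  by apply: leq_sum => j _; exact: card_even_sets_mem_le.
by rewrite sum_nat_const card_ord.
Qed.

Lemma sum_card_even_sets_ge : (#|even_sets| - 1) * epsA A <= \sum_(S in even_sets) #|S|.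
Proof.
rewrite (big_setD1 set0 set0_even) /= cards0 add0n.
have -> : #|even_sets| - 1 = #|even_sets :\ set0| by rewrite (cardsD1 set0) set0_even add1n subn1.
rewrite -sum_nat_const; apply: leq_sum => S /[!inE] /andP[S0 ES].
by rewrite /epsA -minEnat -leEnat; apply: bigmin_le_cond; rewrite S0.
Qed.

End EvenSets.

Lemma epsA_plotkin m N (A : 'M[bool]_(m, N)) : m <= N ->
  2 * epsA A * (2 ^ (N - m) - 1) <= N * 2 ^ (N - m).
Proof.
move=> le_mN; have : 2 ^ (N - m) <= #|even_sets A|.
  by rewrite -(leq_pmul2l (expn_gt0 2 m)) -expnD subnKC //; exact: card_even_sets_ge.
have := sum_card_even_sets_le A; have := sum_card_even_sets_ge A.
have := expn_gt0 2 (N - m).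
set E := #|even_sets A|; set s := \sum_(S in _) _; set e := epsA A; set K := 2 ^ (N - m).
(* K <= E gives 2 e (K - 1) E <= 2 e (E - 1) K <= N E K. *)
nia.
Qed.

(* Positions are numbered from 1 here; column c of the matrix below carries
   position c + 1. *)
Definition weight k (Y : nat -> bool) : nat := \sum_(1 <= w < 2 ^ k) Y w.

Definition triple_one_free k (Y : nat -> bool) : Prop :=
  forall j v, j < k -> 0 < v < 2 ^ j -> Y (2 ^ j + v) + Y (2 ^ j) + Y v != 1.

Lemma weightS k Y :
  weight k.+1 Y = weight k Y + Y (2 ^ k) + \sum_(1 <= v < 2 ^ k) Y (2 ^ k + v).
Proof.
have k_gt0 := expn_gt0 2 k.
have kS : 2 ^ k.+1 = 2 ^ k + 2 ^ k by rewrite expnS mul2n addnn.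
rewrite /weight (@big_cat_nat _ _ _ (2 ^ k)) /=; try lia.
rewrite -addnA; congr (_ + _); rewrite big_ltn kS; try lia.
congr (_ + _); rewrite -{1}(add1n (2 ^ k)) big_addn addnK.
by apply: eq_bigr => v _; rewrite addnC.
Qed.

Lemma triple_one_free_weight_ge k Y : triple_one_free k.+1 Y ->
  (exists2 w, 0 < w < 2 ^ k.+1 & Y w) -> 2 ^ k <= weight k.+1 Y.
Proof.
elim: k => [|k IH] hY [w w_range Yw].
  have w1 : w = 1 by move: w_range; rewrite expn1; lia.
  by rewrite /weight expn1 big_nat1 -w1 Yw.
set a := 2 ^ k.+1.
have aS : 2 ^ k.+2 = a + a by rewrite expnS mul2n addnn.
have pair v : 0 < v < a -> Y (a + v) + Y a + Y v != 1 by apply: hY.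
rewrite weightS -/a; case Ya : (Y a).
- have : \sum_(1 <= v < a) 1 <= weight k.+1 Y + \sum_(1 <= v < a) Y (a + v).
    rewrite /weight -/a -big_split big_nat_cond [X in _ <= X]big_nat_cond.
    apply: leq_sum => v /andP[/pair + _]; rewrite Ya.
    by case: (Y v); case: (Y (a + v)).
  by rewrite sum_nat_const_nat muln1 /=; lia.
- have upper : \sum_(1 <= v < a) Y (a + v) = weight k.+1 Y.
    apply: eq_big_nat => v /pair; rewrite Ya.
    by case: (Y v); case: (Y (a + v)).
  have lower : exists2 w', 0 < w' < a & Y w'.
    case: (ltngtP w a) => [w_lt | a_lt | w_a].
    + by exists w => //; lia.
    + have v_range : 0 < w - a < a by move: w_range; rewrite aS; lia.
      exists (w - a) => //; move: (pair _ v_range).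
      by rewrite subnKC ?(ltnW a_lt) // Yw Ya; case: (Y (w - a)).
    + by move: Yw; rewrite w_a Ya.
  have := IH (fun j v hj => hY j v (leqW hj)) lower.
  by rewrite upper /a expnS; lia.
Qed.

Section Periodic.
Variables (N T : nat) (P : pred nat).
Hypothesis P_periodic : forall c, c + T < N -> P (c + T) = P c.

Lemma periodic_mulD r q : r + q * T < N -> P (r + q * T) = P r.
Proof.
elim: q => [|q IH] lt; first by rewrite addn0.
by rewrite mulSn (addnC T) addnA P_periodic ?IH //; lia.
Qed.

Lemma periodic_mod c : c < N -> P c = P (c %% T).
Proof. by move=> lt; rewrite {1}(divn_eq c T) addnC periodic_mulD // addnC -divn_eq. Qed.

Lemma sum_periodic q : q * T <= N -> \sum_(0 <= c < q * T) P c = q * \sum_(0 <= c < T) P c.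
Proof.
elim: q => [|q IH] le; first by rewrite big_geq.
rewrite mulSn in le *; rewrite (@big_cat_nat _ _ _ T) ?leq_addr //= -{2}(add0n T) big_addn addKn.
rewrite mulSn -IH; last by lia.
by congr (_ + _); apply: eq_big_nat => c c_lt; rewrite P_periodic //; lia.
Qed.

End Periodic.

Lemma card_setI_seq (T : finType) (S : {set T}) (s : seq T) :
  uniq s -> #|S :&: [set x in s]| = count (mem S) s.
Proof.
move=> s_uniq; rewrite -size_filter -(card_uniqP _) ?filter_uniq //.
by apply: eq_card => x; rewrite !inE mem_filter.
Qed.

Definition lead2 (w : nat) : nat := 2 ^ trunc_log 2 w.

Lemma lead2_expD j v : v < 2 ^ j -> lead2 (2 ^ j + v) = 2 ^ j.
Proof. by move=> v_lt; rewrite /lead2 (@trunc_log_eq 2 j) // expnS; lia. Qed.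

Lemma lead2_exp j : lead2 (2 ^ j) = 2 ^ j.
Proof. by rewrite -{1}[2 ^ j]addn0 lead2_expD // expn_gt0. Qed.

Section Construction.
Variables n k : nat.
Local Notation N := (n + k).+1.

Definition period : nat := (2 ^ k.+1).-1.

Lemma period_def : period = 2 * 2 ^ k - 1.
Proof. by rewrite /period expnS subn1. Qed.

Lemma period_gt0 : 0 < period.
Proof. by rewrite period_def; have := expn_gt0 2 k; lia. Qed.

Definition col (x : nat) : 'I_N := inord x.

Definition col_set (s : seq nat) : {set 'I_N} := [set j in map col s].

Definition tie (c : 'I_(N - period)) : {set 'I_N} := col_set [:: c : nat; c + period].

Definition triple (w : nat) : {set 'I_N} :=
  col_set [:: w.-1; (lead2 w).-1; (w - lead2 w).-1].

Definition nonpowers : {set 'I_period} := [set w : 'I_period | lead2 w.+1 != w.+1].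

Definition row_sets : {set {set 'I_N}} :=
  [set tie c | c : 'I_(N - period)] :|: [set triple w.+1 | w : 'I_period in nonpowers].

Definition tie_triple_mx : 'M[bool]_(n, N) := \matrix_(i, j) (j \in nth set0 (enum row_sets) i).

Lemma card_nonpowers : #|nonpowers| <= period - k.+1.
Proof.
have pow_lt (t : 'I_k.+1) : (2 ^ t).-1 < period.
  have := ltn_ord t; rewrite -(ltn_exp2l _ _ (ltnSn 1)) /period => lt.
  by have := expn_gt0 2 t; lia.
have pow_inj : injective (fun t => Ordinal (pow_lt t)).
  move=> t t' /(congr1 val) /= eq_pow; apply/ord_inj/(@expnI 2) => //.
  by have := expn_gt0 2 t; have := expn_gt0 2 t'; lia.
have : k.+1 <= #|~: nonpowers|.
  rewrite -[k.+1]card_ord -(card_imset _ pow_inj).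
  apply/subset_leq_card/subsetP => _ /imsetP[t _ ->].
  by rewrite !inE negbK /= prednK ?expn_gt0 // lead2_exp.
by have := cardsC nonpowers; rewrite card_ord; lia.
Qed.

Lemma card_rows : period <= N -> #|row_sets| <= n.
Proof.
move=> le_period_N; apply: leq_trans (leq_card_setU _ _) _.
have ties : #|[set tie c | c : 'I_(N - period)]| <= N - period.
  by apply: leq_trans (leq_imset_card _ _) _; rewrite card_ord.
have triples := leq_imset_card (fun w : 'I_period => triple w.+1) nonpowers.
have k_lt : k.+1 <= period.
  by rewrite period_def; have := ltn_expl k (ltnSn 1); lia.
apply: leq_trans (leq_add ties triples) _.
by move: card_nonpowers; set c := #|nonpowers|; lia.
Qed.

Lemma colK x : x < N -> col x = x :> nat.
Proof. exact: inordK. Qed.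

Lemma card_setI_col_set S s : all (gtn N) s -> uniq s ->
  #|S :&: col_set s| = count (fun x => col x \in S) s.
Proof.
move=> s_lt s_uniq; rewrite card_setI_seq ?count_map // map_inj_in_uniq //.
by move=> x y /(allP s_lt) x_lt /(allP s_lt) y_lt /(congr1 val); rewrite /= !colK.
Qed.

Section OneFree.
Variable S : {set 'I_N}.
Hypotheses (le_period_N : period <= N) (S_one_free : one_free tie_triple_mx S).

Lemma one_free_row X : X \in row_sets -> #|S :&: X| != 1.
Proof.
move=> X_row; have i_lt : index X (enum row_sets) < n.
  by apply: leq_trans (card_rows le_period_N); rewrite cardE index_mem mem_enum.
have := forallP S_one_free (Ordinal i_lt); rewrite /colsum.
suff -> : [set j in S | tie_triple_mx (Ordinal i_lt) j] = S :&: X by [].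
by apply/setP => j; rewrite !inE mxE /= nth_index ?mem_enum.
Qed.

Lemma one_free_tie c : c + period < N -> (col (c + period) \in S) = (col c \in S).
Proof.
move=> lt; have c_lt : c < N - period by lia.
have row : tie (Ordinal c_lt) \in row_sets by rewrite inE imset_f.
have := one_free_row row; rewrite card_setI_col_set /=.
- by case: (col c \in S); case: (col (c + period) \in S).
- by apply/and3P; split; lia.
- by rewrite inE; have := period_gt0; lia.
Qed.

Lemma one_free_triple : triple_one_free k.+1 (fun w => col w.-1 \in S).
Proof.
move=> j v j_lt v_range.
have : 2 ^ j.+1 <= 2 ^ k.+1 by rewrite leq_exp2l.
rewrite !expnS => le_pow; have := expn_gt0 2 j => pow_gt0.
have w_lt : (2 ^ j + v).-1 < period by rewrite period_def; lia.
have lead : lead2 (2 ^ j + v) = 2 ^ j by apply: lead2_expD; lia.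
have row : triple (2 ^ j + v) \in row_sets.
  rewrite inE; apply/orP; right; apply/imsetP; exists (Ordinal w_lt); last first.
    by rewrite /= prednK //; lia.
  by rewrite inE /= prednK ?lead; lia.
have := one_free_row row; rewrite /triple lead addKn card_setI_col_set /=.
- by rewrite addn0 addnA.
- by apply/and4P; split => //; lia.
- by rewrite !inE; lia.
Qed.

Lemma card_one_free_ge : S != set0 -> 2 ^ k * (N %/ period) <= #|S|.
Proof.
move=> /set0Pn[j0 j0S].
pose P c := col c \in S.
have P_periodic c : c + period < N -> P (c + period) = P c by exact: one_free_tie.
have period_S : 2 ^ k.+1 = period.+1 by rewrite /period prednK ?expn_gt0.
have weight_P : weight k.+1 (fun w => col w.-1 \in S) = \sum_(0 <= c < period) P c.
  by rewrite /weight period_S big_add1.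
have weight_ge : 2 ^ k <= weight k.+1 (fun w => col w.-1 \in S).
  apply: triple_one_free_weight_ge; first exact: one_free_triple.
  exists (j0 %% period).+1; last by rewrite /= -/(P _) -(periodic_mod P_periodic) // /P /col inord_val.
  by rewrite period_S /= ltnS ltn_pmod ?period_gt0.
have card_S : #|S| = \sum_(0 <= c < N) P c.
  rewrite -sum1_card big_mkcond big_mkord /=.
  by apply: eq_bigr => c _; rewrite /P /col inord_val; case: (c \in S).
rewrite card_S (@big_cat_nat _ _ _ (N %/ period * period)) ?leq_divM //=.
rewrite (sum_periodic P_periodic) ?leq_divM // -weight_P mulnC.
by apply: leq_trans (leq_addr _ _); rewrite leq_mul2l weight_ge orbT.
Qed.

End OneFree.

Lemma uA_tie_triple_mx : period <= N -> 2 ^ k * (N %/ period) <= uA tie_triple_mx.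
Proof.
move=> le_period_N; rewrite /uA -minEnat -leEnat.
apply: le_bigmin => [|S /andP[S_ne S_one_free]]; rewrite leEnat.
- have : 2 ^ k <= period by rewrite period_def; have := expn_gt0 2 k; lia.
  move/leq_mul/(_ (leqnn (N %/ period))) => /leq_trans; apply.
  by rewrite mulnC (leq_trans (leq_divM N period)).
- exact: card_one_free_ge.
Qed.

End Construction.

Lemma ltn_ceil_mul e N P T : 0 < T -> 0 < P -> e * T <= N * P -> e < (N %/ T).+1 * P.
Proof.
move=> T_gt0 P_gt0 le; rewrite -(ltn_pmul2r T_gt0); apply: leq_ltn_trans le _.
by rewrite mulnAC ltn_pmul2r // ltn_ceil.
Qed.

Lemma epsA_lt_period n k (A : 'M[bool]_(n, (n + k).+1)) :
  epsA A < ((n + k).+1 %/ period k).+1 * 2 ^ k.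
Proof.
apply: ltn_ceil_mul; [exact: period_gt0 | exact: expn_gt0 |].
have := epsA_plotkin A (leqW (leq_addr k n)).
rewrite (_ : (n + k).+1 - n = k.+1); last by lia.
by rewrite period_def expnS -mulnA (mulnCA _ 2) leq_pmul2l.
Qed.

Lemma u_mn_ge n k : 2 ^ k * ((n + k).+1 %/ period k) <= u_mn n (n + k).+1.
Proof.
have [le|lt] := leqP (period k) (n + k).+1; last by rewrite divn_small ?muln0.
exact: leq_trans (uA_tie_triple_mx le) (leq_bigmax _).
Qed.

Theorem corollary6p2 (k n : nat) : (0 < k)%N -> (0 < n)%N ->
  (eps_mn n (n + k) <= u_mn n (n + k) + 2 ^ (k - 1) + 1)%N.
Proof.
case: k => [//|k] _ _; rewrite subn1 /= addnS.
apply/bigmax_leqP => A _.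
have := epsA_lt_period A; have := u_mn_ge n k.
by rewrite mulSn mulnC; lia.
Qed.
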